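(* Let $\mathrm{sendMsg}:\mathbb{V}\times A\times\mathbb{V}\times A\times B\to(\mathbb{V}\times C)^{*}$ and $\odot:C\times C\to C$. If calls $\mathrm{reduceByKey}(\odot,\cdot)$ (on pair RDDs over $\mathbb{V}\times C$) have deterministic outcomes, then calls $\mathrm{aggregateMessages}(\mathrm{sendMsg},\odot,\mathit{graphRdd})$ have deterministic outcomes.
   Context: Lists are finite; $X^{*}$ denotes lists over $X$; $\mathrm{foldl}(f,b,[x_1,\dots,x_n])=f(\cdots f(f(b,x_1),x_2)\cdots,x_n)$ and $\mathrm{reducel}(f,[x_1,\dots,x_n])=\mathrm{foldl}(f,x_1,[x_2,\dots,x_n])$. An RDD is a list of lists (''partitions''); a pair RDD is an RDD of (key, value) pairs; $\mathrm{filterkey}(k,L)$ lists the values of pairs with key $k$ in $L$ in order. A partitioning of a list $L$ splits $L$ into consecutive pieces and permutes them. $\mathrm{reduceByKey}_{\mathrm{det}}(\odot,[q_1,\dots,q_m])$ returns a pair RDD containing each key $k$ occurring in some $q_i$ once, with value $\mathrm{reducel}(\odot,[c_{i_1},\dots,c_{i_r}])$ where $i_1<\dots<i_r$ are the indices of pieces containing $k$ and $c_i=\mathrm{reducel}(\odot,\mathrm{filterkey}(k,q_i))$; calls $\mathrm{reduceByKey}(\odot,\cdot)$ have deterministic outcomes if the value at every key $k$ occurring in $L$ of $\mathrm{reduceByKey}_{\mathrm{det}}(\odot,P(L))$ equals $\mathrm{reducel}(\odot,\mathrm{filterkey}(k,L))$ for all lists $L$ of pairs and partitionings $P$. Let $\mathbb{V}$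 be the set of vertex identifiers. A graph RDD with vertex attributes in $A$ and edge attributes in $B$ consists of a vertex RDD (an RDD over $\mathbb{V}\times A$ in which each vertex identifier appears at most once) and an edge RDD (an RDD over $\mathbb{V}\times\mathbb{V}\times B$ of triples (source, destination, attribute), multi-edges allowed), such that every endpoint of an edge appears in the vertex RDD; two graph RDDs represent the same graph if they have the same vertex pairs and the same multiset of edge triples, possibly partitioned and ordered differently. $\mathrm{aggregateMessages}(\mathrm{sendMsg},\odot,\mathit{graphRdd})$: replace each edge partition $[e_1,\dots,e_s]$ by the concatenation of the lists $\mathrm{sendMsg}(u,a_u,v,a_v,b)$ for $e_j=(u,v,b)$, where $a_u,a_v$ are the attributes of $u,v$ in the vertex RDD, obtaining a pair RDD over $\mathbb{V}\times C$, and apply $\mathrm{reduceByKey}(\odot,\cdot)$ to it (this last step being executed in a possibly non-deterministic order, as modeled by reduceByKey). Calls $\mathrm{aggregateMessages}(\mathrm{sendMsg},\odot,\mathit{graphRdd})$ have deterministic outcomes if for any two graph RDDs $g_1,g_2$ representing the same graph and every vertex identifier $v$, the value associated with $v$ in $\mathrm{aggregateMessages}(\mathrm{sendMsg},\odot,g_1)$ equals that in $\mathrm{aggregateMessages}(\mathrm{sendMsg},\odot,g_2)$. *)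

From mathcomp Require Import all_boot.
From Stdlib Require Permutation List.

Set Implicit Arguments.
Unset Strict Implicit.
Unset Printing Implicit Defensive.

(** An RDD is a list of partitions. *)
Definition rdd (X : Type) := seq (seq X).

Definition reducel {X : Type} (f : X -> X -> X) (s : seq X) : option X :=
  match s with
  | [::] => None
  | x :: s' => Some (foldl f x s')
  end.

Definition filterkey {K : eqType} {X : Type} (k : K) (L : seq (K * X)) : seq X :=
  [seq p.2 | p <- L & p.1 == k].

Fixpoint lookup {K : eqType} {X : Type} (k : K) (s : seq (K * X)) : option X :=
  match s with
  | [::] => None
  | (k', x) :: s' => if k' == k then Some x else lookup k s'
  end.

Definition partitioning {X : Type} (L : seq X) (P : rdd X) : Prop :=
  exists pieces : seq (seq X),
    flatten pieces = L /\ Permutation.Permutation pieces P.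

(** reduceByKey_det op [q1;...;qm]: each key k occurring in some q_i once,
    with value reducel op [c_{i1};...;c_{ir}], c_i = reducel op (filterkey k q_i),
    i1 < ... < ir the indices of pieces containing k.
    (The resulting pair RDD is returned as a flat list of pairs.) *)
Definition reduceByKey_det {K : eqType} {X : Type} (op : X -> X -> X)
    (P : rdd (K * X)) : seq (K * X) :=
  pmap (fun k => omap (fun c => (k, c))
                      (reducel op (pmap (fun q => reducel op (filterkey k q)) P)))
       (undup (map fst (flatten P))).

Definition reduceByKey_deterministic (K : eqType) {X : Type} (op : X -> X -> X) : Prop :=
  forall (L : seq (K * X)) (P : rdd (K * X)),
    partitioning L P ->
    forall k : K, k \in map fst L ->
      lookup k (reduceByKey_det op P) = reducel op (filterkey k L).

Record graphRDD (V : eqType) (A B : Type) := GraphRDD {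
  vertices : rdd (V * A);
  edges : rdd (V * V * B)
}.

Definition wf_graphRDD {V : eqType} {A B : Type} (g : graphRDD V A B) : Prop :=
  uniq (map fst (flatten (vertices g))) /\
  (forall e, List.In e (flatten (edges g)) ->
     e.1.1 \in map fst (flatten (vertices g)) /\
     e.1.2 \in map fst (flatten (vertices g))).

Definition same_graph {V : eqType} {A B : Type} (g1 g2 : graphRDD V A B) : Prop :=
  (forall p, List.In p (flatten (vertices g1)) <-> List.In p (flatten (vertices g2))) /\
  Permutation.Permutation (flatten (edges g1)) (flatten (edges g2)).

(** Messages sent along one edge (u,v,b): sendMsg(u,a_u,v,a_v,b). For
    well-formed graph RDDs both attribute lookups succeed. *)
Definition edge_msgs {V : eqType} {A B C : Type}
    (sendMsg : V -> A -> V -> A -> B -> seq (V * C))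
    (g : graphRDD V A B) (e : V * V * B) : seq (V * C) :=
  let: (u, v, b) := e in
  match lookup u (flatten (vertices g)), lookup v (flatten (vertices g)) with
  | Some au, Some av => sendMsg u au v av b
  | _, _ => [::]
  end.

Definition message_rdd {V : eqType} {A B C : Type}
    (sendMsg : V -> A -> V -> A -> B -> seq (V * C))
    (g : graphRDD V A B) : rdd (V * C) :=
  map (fun part => flatten (map (edge_msgs sendMsg g) part)) (edges g).

(** r is a possible outcome of aggregateMessages(sendMsg, op, g): reduceByKey
    applied to the message RDD, its partitions combined in an arbitrary order. *)
Definition aggregateMessages_outcome {V : eqType} {A B C : Type}
    (sendMsg : V -> A -> V -> A -> B -> seq (V * C)) (op : C -> C -> C)
    (g : graphRDD V A B) (r : seq (V * C)) : Prop :=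
  exists P : rdd (V * C),
    Permutation.Permutation (message_rdd sendMsg g) P /\ r = reduceByKey_det op P.

Definition aggregateMessages_deterministic {V : eqType} {A B C : Type}
    (sendMsg : V -> A -> V -> A -> B -> seq (V * C)) (op : C -> C -> C) : Prop :=
  forall g1 g2 : graphRDD V A B,
    wf_graphRDD g1 -> wf_graphRDD g2 -> same_graph g1 g2 ->
    forall r1 r2,
      aggregateMessages_outcome sendMsg op g1 r1 ->
      aggregateMessages_outcome sendMsg op g2 r2 ->
      forall v : V, lookup v r1 = lookup v r2.

(* If reduceByKey is deterministic, then [op] is commutative and associative:
   splitting [(k,x); (k,y)] into the pieces [(k,y)], [(k,x)] in swapped order
   forces [op y x = op x y], and splitting [(k,x); (k,y); (k,z)] as
   [(k,x)], [(k,y); (k,z)] forces [op x (op y z) = op (op x y) z].  Hence the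
   value reduceByKey attaches to a key is the reduction of that key's values
   in any order, so it only depends on the multiset of messages.  Two graph
   RDDs representing the same graph give the same vertex attributes (vertex
   identifiers being unique) and permuted edge lists, hence permuted message
   lists. *)
From Stdlib Require Import Permutation.
From Stdlib Require List.
From mathcomp Require Import all_boot.

Set Implicit Arguments.
Unset Strict Implicit.
Unset Printing Implicit Defensive.

Section Lookup.
Variables (K : eqType) (X : Type).
Implicit Types (s : seq (K * X)) (k : K) (x : X).

Lemma In_mem_map_fst s k x : List.In (k, x) s -> k \in map fst s.
Proof.
elim: s => [|[k' x'] s IHs] //= [[-> _]|kx_s]; rewrite in_cons ?eqxx //.
by rewrite IHs ?orbT.
Qed.

Lemma lookup_In s k x : lookup k s = Some x -> List.In (k, x) s.
Proof.
elim: s => [|[k' x'] s IHs] //=.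
by case: eqP => [-> [<-]|_ /IHs]; [left | right].
Qed.

Lemma lookup_In_uniq s k x :
  uniq (map fst s) -> List.In (k, x) s -> lookup k s = Some x.
Proof.
elim: s => [|[k' x'] s IHs] //= /andP [k'_notin uniq_s] [[-> ->]|kx_s].
  by rewrite eqxx.
case: eqP => [k'k|_]; last exact: IHs.
by rewrite k'k (In_mem_map_fst kx_s) in k'_notin.
Qed.

Lemma eq_lookup_In s1 s2 k :
  uniq (map fst s1) -> uniq (map fst s2) ->
  (forall p, List.In p s1 <-> List.In p s2) ->
  lookup k s1 = lookup k s2.
Proof.
move=> uniq1 uniq2 eq_s.
case E1: (lookup k s1) => [x|].
  by apply/esym/lookup_In_uniq => //; apply/eq_s/lookup_In.
case E2: (lookup k s2) => [x|] //.
by rewrite (lookup_In_uniq uniq1 (proj2 (eq_s _) (lookup_In E2))) in E1.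
Qed.

End Lookup.

Lemma Permutation_flatten (T : Type) (ss1 ss2 : seq (seq T)) :
  Permutation ss1 ss2 -> Permutation (flatten ss1) (flatten ss2).
Proof.
elim=> //= [s ss ss' _ IH|s s' ss|ss ss' ss'' _ IH1 _ IH2].
- exact: Permutation_app_head.
- by rewrite !catA; apply/Permutation_app_tail/Permutation_app_comm.
- exact: Permutation_trans IH1 IH2.
Qed.

Lemma Permutation_filter (T : Type) (a : pred T) (s1 s2 : seq T) :
  Permutation s1 s2 -> Permutation (filter a s1) (filter a s2).
Proof.
elim=> //= [x s s' _ IH|x y s|s s' s'' _ IH1 _ IH2].
- by case: (a x) => //; constructor.
- by case: (a x); case: (a y) => //; constructor.
- exact: Permutation_trans IH1 IH2.
Qed.

Lemma Permutation_mem (T : eqType) (s1 s2 : seq T) x :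
  Permutation s1 s2 -> (x \in s1) = (x \in s2).
Proof.
elim=> //= [y s s' _ IH|y z s|s s' s'' _ IH1 _ IH2].
- by rewrite !in_cons IH.
- by rewrite !in_cons orbCA.
- by rewrite IH1.
Qed.

Lemma flatten_map_flatten (S T : Type) (f : S -> seq T) (ss : seq (seq S)) :
  flatten [seq flatten (map f s) | s <- ss] = flatten (map f (flatten ss)).
Proof. by elim: ss => //= s ss ->; rewrite map_cat flatten_cat. Qed.

Section ReduceCommutativeSemigroup.
Variables (X : Type) (op : X -> X -> X).
Hypotheses (opC : commutative op) (opA : associative op).

Lemma foldl_Permutation x (s1 s2 : seq X) :
  Permutation s1 s2 -> foldl op x s1 = foldl op x s2.
Proof.
move=> perm_s; elim: perm_s x => [|y s s' _ IH|y z s|s s' s'' _ IH1 _ IH2] x /=.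
- by [].
- exact: IH.
- by rewrite -!opA (opC y z).
- by rewrite IH1.
Qed.

Lemma reducel_Permutation (s1 s2 : seq X) :
  Permutation s1 s2 -> reducel op s1 = reducel op s2.
Proof.
elim=> //= [x s s' perm_s _|x y s|s s' s'' _ IH1 _ IH2].
- by rewrite (foldl_Permutation x perm_s).
- by rewrite opC.
- by rewrite IH1.
Qed.

End ReduceCommutativeSemigroup.

Section ReduceByKey.
Variables (K : eqType) (X : Type) (op : X -> X -> X).
Implicit Types (L : seq (K * X)) (P : rdd (K * X)) (k : K).

Lemma reduceByKey_deterministic_comm k :
  reduceByKey_deterministic K op -> commutative op.
Proof.
move=> det x y.
have part : partitioning [:: (k, x); (k, y)] [:: [:: (k, y)]; [:: (k, x)]].
  by exists [:: [:: (k, x)]; [:: (k, y)]]; split; last exact: perm_swap.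
have := det _ _ part k; rewrite /= !inE eqxx => /(_ isT).
by rewrite /reduceByKey_det /filterkey /= !inE eqxx /= eqxx /= eqxx => -[->].
Qed.

Lemma reduceByKey_deterministic_assoc k :
  reduceByKey_deterministic K op -> associative op.
Proof.
move=> det x y z.
have part : partitioning [:: (k, x); (k, y); (k, z)]
                        [:: [:: (k, x)]; [:: (k, y); (k, z)]].
  by exists [:: [:: (k, x)]; [:: (k, y); (k, z)]].
have := det _ _ part k; rewrite /= !inE eqxx => /(_ isT).
by rewrite /reduceByKey_det /filterkey /= !inE eqxx /= eqxx /= eqxx => -[->].
Qed.

Lemma filterkey_notin L k : k \notin map fst L -> filterkey k L = [::].
Proof.
elim: L => [|[k' x] L IHL] //=.
rewrite in_cons negb_or eq_sym => /andP [/negbTE k'k /IHL filterkey_L].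
by rewrite /filterkey /= k'k.
Qed.

Lemma lookup_reduceByKey_det_notin P k :
  k \notin map fst (flatten P) -> lookup k (reduceByKey_det op P) = None.
Proof.
rewrite /reduceByKey_det -mem_undup.
elim: (undup _) => [|k' ks IHks] //=.
rewrite in_cons negb_or => /andP [k'k k_ks].
case: (reducel _ _) => [c|] /=; last exact: IHks.
by rewrite eq_sym (negbTE k'k) IHks.
Qed.

Lemma lookup_reduceByKey_det L P k :
  reduceByKey_deterministic K op -> partitioning L P ->
  lookup k (reduceByKey_det op P) = reducel op (filterkey k L).
Proof.
move=> det part; have [k_L|k_notin_L] := boolP (k \in map fst L).
  exact: det.
rewrite filterkey_notin // lookup_reduceByKey_det_notin //.
have [pieces [flatten_pieces perm_P]] := part.
have perm_keys := Permutation_map fst (Permutation_flatten perm_P).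
by rewrite -(Permutation_mem _ perm_keys) flatten_pieces.
Qed.

Lemma lookup_reduceByKey_det_Permutation L1 L2 P1 P2 k :
  reduceByKey_deterministic K op -> Permutation L1 L2 ->
  partitioning L1 P1 -> partitioning L2 P2 ->
  lookup k (reduceByKey_det op P1) = lookup k (reduceByKey_det op P2).
Proof.
move=> det perm_L part1 part2.
rewrite (lookup_reduceByKey_det _ det part1).
rewrite (lookup_reduceByKey_det _ det part2).
apply: reducel_Permutation.
- exact: reduceByKey_deterministic_comm det.
- exact: reduceByKey_deterministic_assoc det.
- exact/Permutation_map/Permutation_filter.
Qed.

End ReduceByKey.

Lemma Permutation_message_rdd (V : eqType) (A B C : Type)
    (sendMsg : V -> A -> V -> A -> B -> seq (V * C)) (g1 g2 : graphRDD V A B) :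
  wf_graphRDD g1 -> wf_graphRDD g2 -> same_graph g1 g2 ->
  Permutation (flatten (message_rdd sendMsg g1))
              (flatten (message_rdd sendMsg g2)).
Proof.
move=> [uniq1 _] [uniq2 _] [same_V same_E].
have same_msgs : edge_msgs sendMsg g1 =1 edge_msgs sendMsg g2.
  by move=> [[u w] b] /=; rewrite !(eq_lookup_In _ uniq1 uniq2 same_V).
rewrite /message_rdd !flatten_map_flatten (eq_map same_msgs).
exact/Permutation_flatten/Permutation_map.
Qed.

Theorem proposition5 (V : eqType) (A B C : Type)
    (sendMsg : V -> A -> V -> A -> B -> seq (V * C)) (op : C -> C -> C) :
  reduceByKey_deterministic V op ->
  aggregateMessages_deterministic sendMsg op.
Proof.
move=> det g1 g2 wf1 wf2 same r1 r2 [P1 [perm1 ->]] [P2 [perm2 ->]] v.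
apply: (lookup_reduceByKey_det_Permutation v det
          (Permutation_message_rdd sendMsg wf1 wf2 same)).
- by exists (message_rdd sendMsg g1).
- by exists (message_rdd sendMsg g2).
Qed.
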